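(* For any signature $\Sigma$, $r_{A_l(\Sigma)}=\pi_l\circ r_{A_p(\Sigma)}$ as maps $\mathbf N(T(\Sigma))\to\mathbb K\langle A_l(\Sigma)\rangle$.
   Context: $\mathbb K$ is a field of characteristic zero; $[P]$ is $1$ if $P$ holds, $0$ otherwise. A signature is a set $\Sigma$ with arity map $|\cdot|:\Sigma\to\mathbb N$. A $\Sigma$-term is the leaf $\bot$ or $s(t_1,\dots,t_n)$ with $s$ of arity $n$, $t_i$ terms; degree = number of internal nodes. A $\Sigma$-forest is a finite word of terms; reduced if no term is $\bot$. $\mathbf N(T(\Sigma))$ is the vector space with basis $E_f$, $f$ reduced forests. Internal nodes of a forest $f$ are numbered $1,\dots,\deg f$ by left-to-right preorder; $d_f(i)$ decoration; $i\to^f_j i'$ means $i'$ is the $j$-th child of $i$; roots are the roots of terms. A $\Sigma$-forest-like alphabet is a set $A$ with arbitrary subset $R^A$, subsets $D^A_s$ ($s\in\Sigma$), binary relations $\to^A_j$ ($j\ge1$). $\mathbb K\langle A\rangle$: noncommutative polynomials, possibly infinite support, bounded degree. $w\in A^*$ is $A$-compatible with $f$ if it has length $\deg f$, $w(i)\in R^A$ for roots $i$, $w(i)\in D^A_{d_f(i)}$ for all $i$, and $i\to^f_j i'\Rightarrow w(i)\to^A_j w(i')$; $r_A(E_f)=\sum_{w\in A^*}[w\ A\text{-compatible with }f]\,w$. $A_p(\Sigma)=\{a^s_u:s\in\Sigma,u\in\mathbb N^*\}$ with root relation $\{a^s_{0^\ell}:\ell\in\mathbb N\}$, $D_s=\{a^s_u:u\in\mathbb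 N^*\}$, $a^s_u\to_j a^{s'}_v$ iff $v=u\,j\,0^\ell$ for some $\ell\in\mathbb N$. $A_l(\Sigma)=\{a^s_\ell:s\in\Sigma,\ell\in\mathbb N\}$ with root relation all of $A_l(\Sigma)$, $D_s=\{a^s_\ell:\ell\in\mathbb N\}$, and $a^s_\ell\to_j a^{s'}_{\ell'}$ iff $\ell<\ell'$ (for every $j\ge1$). $\pi_l:\mathbb K\langle A_p(\Sigma)\rangle\to\mathbb K\langle A_l(\Sigma)\rangle$ is the linear map sending a word $a^{s_1}_{u_1}\cdots a^{s_n}_{u_n}$ to $a^{s_1}_{|u_1|}\cdots a^{s_n}_{|u_n|}$, where $|u|$ is the length of $u$. *)

From HB Require Import structures.
From mathcomp Require Import all_boot all_algebra.
From mathcomp Require Import boolp.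
Set Implicit Arguments. Unset Strict Implicit. Unset Printing Implicit Defensive.
Import GRing.Theory.
Local Open Scope ring_scope.

(* Sigma-terms: the leaf Bot or s(t_1,...,t_n).  Well-formedness
   (n = arity of s) is a separate predicate. *)
Inductive term (Sig : Type) := Bot | Node of Sig & seq (term Sig).
Arguments Bot {Sig}.

Fixpoint wf_term (Sig : Type) (ar : Sig -> nat) (t : term Sig) : bool :=
  match t with
  | Bot => true
  | Node s ts => (size ts == ar s) &&
      (fix aux (ts : seq (term Sig)) : bool :=
         match ts with [::] => true | t' :: ts' => wf_term ar t' && aux ts' end) ts
  end.

Definition forest (Sig : Type) := seq (term Sig).

Definition wf_forest (Sig : Type) (ar : Sig -> nat) (f : forest Sig) : bool :=
  all (wf_term ar) f.

Definition is_bot (Sig : Type) (t : term Sig) : bool :=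
  if t is Bot then true else false.

Definition reduced (Sig : Type) (f : forest Sig) : bool := ~~ has (@is_bot Sig) f.

(* Internal nodes of a term in left-to-right preorder, each given by its
   address (path) and its decoration.  The j-th child (j >= 1) of the node
   with address p has address rcons p j. *)
Fixpoint tnodes (Sig : Type) (t : term Sig) (p : seq nat) : seq (seq nat * Sig) :=
  match t with
  | Bot => [::]
  | Node s ts => (p, s) ::
      (fix aux (ts : seq (term Sig)) (j : nat) : seq (seq nat * Sig) :=
         match ts with
         | [::] => [::]
         | t' :: ts' => tnodes t' (rcons p j) ++ aux ts' j.+1
         end) ts 1%N
  end.

(* Internal nodes of a forest in left-to-right preorder; the root of the
   k-th term (0-based) has address [:: k].  The node numbered i (1-based in
   the paper) is the entry of index i-1 of this list. *)
Definition fnodes (Sig : Type) (f : forest Sig) : seq (seq nat * Sig) :=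
  flatten [seq tnodes (nth Bot f k) [:: k] | k <- iota 0 (size f)].

Definition fdeg (Sig : Type) (f : forest Sig) : nat := size (fnodes f).

Record alphabet (Sig : Type) := Alphabet {
  letter :> Type;
  rootA : letter -> Prop;
  decA : Sig -> letter -> Prop;
  edgeA : nat -> letter -> letter -> Prop
}.

(* Nodes are indexed 0..deg f - 1 here
   (node i of the paper is index i-1).  A node is a root iff its address
   has length 1; i ->^f_j i' iff address(i') = rcons (address i) j. *)
Definition compatible (Sig : Type) (A : alphabet Sig) (f : forest Sig)
    (w : seq A) : Prop :=
  let N := fnodes f in
  size w = size N /\
  (forall i a p s, onth w i = Some a -> onth N i = Some (p, s) ->
     size p = 1%N -> rootA a) /\
  (forall i a p s, onth w i = Some a -> onth N i = Some (p, s) -> decA s a) /\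
  (forall i i' j a a' p s p' s',
     onth w i = Some a -> onth N i = Some (p, s) ->
     onth w i' = Some a' -> onth N i' = Some (p', s') ->
     p' = rcons p j -> edgeA j a a').

(* K<A>: noncommutative series, represented by their coefficient function
   on words. *)
Definition ncpoly (K : fieldType) (A : Type) := seq A -> K.

Definition rA_basis (K : fieldType) (Sig : Type) (A : alphabet Sig)
   (f : forest Sig) : ncpoly K A :=
  fun w => if `[< @compatible Sig A f w >] then 1 else 0.

(* N(T(Sigma)): finite formal K-linear combinations of basis vectors E_f,
   f a reduced (well-formed) forest.  A vector is represented by a list of
   (coefficient, forest) pairs. *)
Definition NT_vec (K : fieldType) (Sig : Type) := seq (K * forest Sig).

Definition NT_ok (K : fieldType) (Sig : Type) (ar : Sig -> nat)
   (x : NT_vec K Sig) : bool :=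
  all (fun c => wf_forest ar c.2 && reduced c.2) x.

Definition rA (K : fieldType) (Sig : Type) (A : alphabet Sig)
   (x : NT_vec K Sig) : ncpoly K A :=
  fun w => \sum_(c <- x) c.1 * @rA_basis K Sig A c.2 w.

(* The alphabet A_p(Sigma): letters a^s_u = (s, u), u in N^* *)
Definition Ap (Sig : Type) : alphabet Sig :=
  @Alphabet Sig (Sig * seq nat)
    (fun a => exists l, a.2 = nseq l 0%N)
    (fun s a => a.1 = s)
    (fun j a b => exists l, b.2 = a.2 ++ j :: nseq l 0%N).

(* The alphabet A_l(Sigma): letters a^s_l = (s, l), l in N *)
Definition Al (Sig : Type) : alphabet Sig :=
  @Alphabet Sig (Sig * nat)
    (fun _ => True)
    (fun s a => a.1 = s)
    (fun j a b => (a.2 < b.2)%N).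

Definition pil_letter (Sig : Type) (a : Sig * seq nat) : Sig * nat :=
  (a.1, size a.2).
Definition pil_word (Sig : Type) (w : seq (Sig * seq nat)) : seq (Sig * nat) :=
  map (@pil_letter Sig) w.

(* For each
   target word v, the fibre {w | pi_l(w) = v, P w <> 0} must be finite and
   the coefficient of v in Q is the sum of the coefficients of P on it. *)
Definition is_pil (K : fieldType) (Sig : eqType)
   (P : ncpoly K (Sig * seq nat)) (Q : ncpoly K (Sig * nat)) : Prop :=
  forall v : seq (Sig * nat),
    exists s : seq (seq (Sig * seq nat)),
      uniq s /\
      (forall w, (w \in s) = (pil_word w == v) && (P w != 0)) /\
      Q v = \sum_(w <- s) P w.

From mathcomp Require Import all_boot all_algebra.
From mathcomp Require Import boolp zify.
Set Implicit Arguments. Unset Strict Implicit. Unset Printing Implicit Defensive.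
Import GRing.Theory.

(* Fix a forest f.  Its nodes are listed in preorder, so every parent comes
   before its children.  An A_l-compatible word only prescribes, for each node,
   a level that increases strictly along edges; an A_p-compatible word is forced
   node by node: a root gets a_{0^l} and the j-th child of a node labelled a_u
   gets a_{u j 0^l}.  Reading the nodes left to right therefore shows that every
   A_l-compatible word has exactly one A_p-compatible preimage under pi_l, and
   that pi_l maps A_p-compatible words to A_l-compatible ones.  So each E_f
   contributes the same coefficient to both sides of the fibre sum over any v. *)

Lemma onth_rconsP (T : Type) (s : seq T) x i y :
  onth (rcons s x) i = Some y -> onth s i = Some y \/ i = size s /\ y = x.
Proof.
rewrite -cats1 onth_cat; case: ltnP => [_|le_si]; first by left.
by move=> /onth1P[Ei <-]; right; split=> //; lia.
Qed.

Lemma onth_take (T : Type) (s : seq T) n i :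
  onth (take n s) i = if i < n then onth s i else None.
Proof. by elim: s n i => [|x s IH] [|n] [|i] //=; rewrite ?if_same ?IH. Qed.

Lemma onth_exists (T : Type) (s : seq T) i :
  i < size s -> exists x, onth s i = Some x.
Proof. by rewrite -onthTE; case: onth => // x _; exists x. Qed.

Lemma take_onth (T : Type) (s : seq T) n x :
  onth s n = Some x -> take n.+1 s = rcons (take n s) x.
Proof.
move=> Ex; have lt_ns : n < size s by rewrite -onthTE Ex.
by rewrite (take_nth x lt_ns) (onth_nth x _ _ _ Ex).
Qed.

Lemma onth_fst (S T : Type) (N : seq (S * T)) i p s :
  onth N i = Some (p, s) -> onth (map fst N) i = Some p.
Proof. by rewrite onth_map => ->. Qed.

Lemma onth_fstP (S T : Type) (N : seq (S * T)) i p :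
  onth (map fst N) i = Some p -> exists s, onth N i = Some (p, s).
Proof. by rewrite onth_map; case: (onth N i) => // -[p' s] [<-]; exists s. Qed.

Lemma onth_rcons_pair (S T : Type) (s : seq S) (t : seq T) x y i a b :
  size s = size t -> onth (rcons s x) i = Some a -> onth (rcons t y) i = Some b ->
  (onth s i = Some a /\ onth t i = Some b) \/ (a = x /\ b = y).
Proof.
move=> st Ea Eb; case: (onth_rconsP Ea) => [{}Ea|[Ei ->]];
  case: (onth_rconsP Eb) => [{}Eb|[Ei' ->]]; auto.
- by move: Ea; rewrite Ei' -st onth_default.
- by move: Eb; rewrite Ei st onth_default.
Qed.

Definition has_earlier_parent (A : seq (seq nat)) (i : nat) : Prop :=
  exists i0 q j, [/\ i0 < i, onth A i0 = Some q & onth A i = Some (rcons q j)].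

Definition parent_ordered (root : seq nat -> Prop) (A : seq (seq nat)) : Prop :=
  uniq A /\ forall i a, onth A i = Some a -> root a \/ has_earlier_parent A i.

Definition subtree_addresses (p : seq nat) (A : seq (seq nat)) : Prop :=
  parent_ordered (eq p) A /\ forall a, a \in A -> exists r, a = p ++ r.

Definition sibling_addresses (p : seq nat) (m : nat) (A : seq (seq nat)) : Prop :=
  parent_ordered (fun a => exists k, a = rcons p k) A /\
  forall a, a \in A -> exists k r, m <= k /\ a = rcons p k ++ r.

Definition forest_addresses (A : seq (seq nat)) : Prop :=
  parent_ordered (fun a => size a = 1%N) A /\ [::] \notin A.

Lemma parent_ordered_nil root : parent_ordered root [::].
Proof. by split=> // i a; rewrite onth0n. Qed.

Lemma parent_ordered_weaken (root root' : seq nat -> Prop) A :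
  (forall a, root a -> root' a) -> parent_ordered root A -> parent_ordered root' A.
Proof. by move=> sub [uA ordA]; split=> // i a /ordA[/sub|]; auto. Qed.

Lemma parent_ordered_cat root A1 A2 :
  parent_ordered root A1 -> parent_ordered root A2 ->
  (forall a, a \in A1 -> a \notin A2) -> parent_ordered root (A1 ++ A2).
Proof.
move=> [uA1 ord1] [uA2 ord2] disj; split.
  rewrite cat_uniq uA1 uA2 andbT; apply/hasPn => a a2; apply/negP => a1.
  by move: (disj a a1); rewrite a2.
move=> i a; rewrite onth_cat; case: ltnP => Hi /[dup] Ea.
  move/ord1 => [|[i0 [q [j [lt0 Eq Ei]]]]]; [by left | right].
  exists i0, q, j; rewrite !onth_cat Hi (ltn_trans lt0 Hi).
  by move: Ei; rewrite Ea.
move/ord2 => [|[i0 [q [j [lt0 Eq Ei]]]]]; [by left | right].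
exists (i0 + size A1), q, j; rewrite !onth_cat [i < _]ltnNge Hi addnK.
have -> : (i0 + size A1 < size A1) = false by lia.
by split=> //; move: Hi lt0; lia.
Qed.

Lemma sibling_addresses_nil p m : sibling_addresses p m [::].
Proof. by split=> //; apply: parent_ordered_nil. Qed.

Lemma sibling_addresses_cat p m A1 A2 :
  subtree_addresses (rcons p m) A1 -> sibling_addresses p m.+1 A2 ->
  sibling_addresses p m (A1 ++ A2).
Proof.
move=> [ord1 pre1] [ord2 pre2]; split.
  apply: parent_ordered_cat.
  - by apply: parent_ordered_weaken ord1 => a <-; exists m.
  - exact: ord2.
  - move=> a /pre1[r ->]; apply/negP => /pre2[k [r' [lt_mk]]].
    move/(congr1 (drop (size p))); rewrite !cat_rcons !drop_size_cat // => -[Ek _].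
    by move: lt_mk; rewrite Ek ltnn.
move=> a; rewrite mem_cat => /orP[/pre1[r ->]|/pre2[k [r [lt_mk ->]]]].
  by exists m, r.
by exists k, r; rewrite ltnW.
Qed.

Lemma subtree_addresses_cons p m A :
  sibling_addresses p m A -> subtree_addresses p (p :: A).
Proof.
move=> [[uA ordA] preA]; split; last first.
  move=> a; rewrite in_cons => /orP[/eqP ->|/preA[k [r [_ ->]]]].
    by exists [::]; rewrite cats0.
  by exists (k :: r); rewrite cat_rcons.
split.
  rewrite /= uA andbT; apply/negP => /preA[k [r [_]]].
  by move/(congr1 size); rewrite size_cat size_rcons; lia.
move=> [|i] a /= => [[<-]|]; first by left.
move=> /[dup] Ea /ordA[[k Ek]|[i0 [q [j [lt0 Eq Ei]]]]]; right.
  by exists 0%N, p, k; split=> //=; rewrite Ea Ek.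
by exists i0.+1, q, j.
Qed.

Lemma forest_address_gt0 A i p : forest_addresses A -> onth A i = Some p -> 0 < size p.
Proof.
move=> [_ nilA] Ep; rewrite lt0n size_eq0; apply: contraNneq nilA => p0.
by apply/onthP; exists i; rewrite Ep p0.
Qed.

Lemma no_earlier_child A n p i q j :
  forest_addresses A -> onth A n = Some p -> onth A i = Some q -> i < n -> q <> rcons p j.
Proof.
move=> addrA Ep Eq lt_in Eqp; have [[uA ordA] _] := addrA.
case: (ordA i q Eq) => [|[i0 [p' [j' [lt0 Ep' Eq']]]]].
  by have := forest_address_gt0 addrA Ep; rewrite Eqp size_rcons; lia.
move: Eq'; rewrite Eq Eqp => -[/rcons_inj[E _]]; subst p'.
have lt_i0A : i0 < size A by rewrite -onthTE Ep'.
have := @onth_inj _ A i0 n uA (leq_ltn_trans (geq_minr _ _) lt_i0A).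
by rewrite Ep Ep' => /(_ erefl); lia.
Qed.

Section ForestNodes.
Variable Sig : Type.

Definition term_nested_ind (P : term Sig -> Prop) (P_Bot : P Bot)
    (P_Node : forall s ts, foldr (fun t acc => P t /\ acc) True ts -> P (Node s ts)) :
  forall t, P t :=
  fix F t := match t with
  | Bot => P_Bot
  | Node s ts => P_Node s ts ((fix G ts :=
      match ts return foldr (fun t acc => P t /\ acc) True ts with
      | [::] => I
      | t :: ts' => conj (F t) (G ts')
      end) ts)
  end.

Fixpoint child_nodes (p : seq nat) (ts : seq (term Sig)) (j : nat) :
    seq (seq nat * Sig) :=
  if ts is t :: ts' then tnodes t (rcons p j) ++ child_nodes p ts' j.+1 else [::].

Lemma tnodes_Node s ts p : tnodes (Node s ts) p = (p, s) :: child_nodes p ts 1.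
Proof. by rewrite /=; congr (_ :: _); elim: ts 1%N => //= t ts IH j; rewrite IH. Qed.

Lemma tnodes_addresses (t : term Sig) p : subtree_addresses p (map fst (tnodes t p)).
Proof.
elim/term_nested_ind: t p => [|s ts IHts] p.
  by split=> //; apply: parent_ordered_nil.
rewrite tnodes_Node map_cons; apply: (@subtree_addresses_cons _ 1).
elim: ts IHts 1%N => [_ j|t ts IH [IHt IHts] j]; first exact: sibling_addresses_nil.
rewrite [child_nodes _ _ _]/= map_cat.
by apply: sibling_addresses_cat; [apply: IHt | apply: IH].
Qed.

Lemma fnodes_addresses (f : forest Sig) : forest_addresses (map fst (fnodes f)).
Proof.
have : sibling_addresses [::] 0 (map fst (fnodes f)).
  rewrite /fnodes; elim: (size f) 0%N => [|n IH] m /=.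
    exact: sibling_addresses_nil.
  by rewrite map_cat; apply: sibling_addresses_cat; [apply: tnodes_addresses | apply: IH].
move=> [ordA preA]; split.
  by apply: parent_ordered_weaken ordA => a [k ->].
by apply/negP => /preA[k [r [_]]].
Qed.

End ForestNodes.

Section Compatibility.
Variable Sig : Type.

Definition compatible_on (A : alphabet Sig) (N : seq (seq nat * Sig)) (w : seq A) :
    Prop :=
  size w = size N /\
  (forall i a p s, onth w i = Some a -> onth N i = Some (p, s) ->
     size p = 1%N -> rootA a) /\
  (forall i a p s, onth w i = Some a -> onth N i = Some (p, s) -> decA s a) /\
  (forall i i' j a a' p s p' s',
     onth w i = Some a -> onth N i = Some (p, s) ->
     onth w i' = Some a' -> onth N i' = Some (p', s') ->
     p' = rcons p j -> edgeA j a a').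
Arguments compatible_on : clear implicits.

Lemma compatible_on_nil A : compatible_on A [::] [::].
Proof. by split=> //; split; [|split] => i; rewrite onth0n. Qed.

Lemma compatible_on_rcons (A : alphabet Sig) N w p s (a : A) :
  compatible_on A N w ->
  (size p = 1%N -> rootA a) -> decA s a ->
  (forall i b q s' j, onth w i = Some b -> onth N i = Some (q, s') ->
     p = rcons q j -> edgeA j b a) ->
  (forall i q s' j, onth N i = Some (q, s') -> q <> rcons p j) ->
  compatible_on A (rcons N (p, s)) (rcons w a).
Proof.
move=> [Sw [Rw [Dw Ew]]] Ra Da Ea no_child.
split; first by rewrite !size_rcons Sw.
split.
  move=> i b q s' Eb EN; case: (onth_rcons_pair Sw Eb EN) => [[Eb' EN']|[-> [-> _]]].
    exact: Rw Eb' EN'.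
  exact: Ra.
split.
  move=> i b q s' Eb EN; case: (onth_rcons_pair Sw Eb EN) => [[Eb' EN']|[-> [_ ->]]].
    exact: Dw Eb' EN'.
  exact: Da.
move=> i i' j b b' q s1 q' s2 Eb EN Eb' EN' Eq'.
case: (onth_rcons_pair Sw Eb EN) => [[Eb0 EN0]|[-> [Eq _]]];
  case: (onth_rcons_pair Sw Eb' EN') => [[Eb1 EN1]|[-> [Eq1 _]]].
- exact: Ew Eb0 EN0 Eb1 EN1 Eq'.
- by apply: Ea Eb0 EN0 _; rewrite -Eq1.
- by case: (no_child _ _ _ j EN1); rewrite Eq' Eq.
- by move: Eq'; rewrite Eq Eq1 => /(congr1 size); rewrite size_rcons; lia.
Qed.
Lemma compatible_pil N (w : seq (Sig * seq nat)) :
  compatible_on (Ap Sig) N w -> compatible_on (Al Sig) N (pil_word w).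
Proof.
move=> [Sw [_ [Dw Ew]]]; split; first by rewrite size_map.
split=> //; split.
  move=> i a p s; rewrite onth_map; case Eb: (onth w i) => [b|] //= [<-].
  exact: Dw Eb.
move=> i i' j a a' p s p' s'; rewrite !onth_map.
case Eb: (onth w i) => [b|] //= [<-] EN; case Eb': (onth w i') => [b'|] //= [<-] EN' Ep.
have [l El] := Ew _ _ _ _ _ _ _ _ _ Eb EN Eb' EN' Ep.
by rewrite /= El size_cat /=; lia.
Qed.

Lemma pil_letter_padded_inj (a1 a2 : Sig * seq nat) pre l1 l2 :
  pil_letter a1 = pil_letter a2 ->
  a1.2 = pre ++ nseq l1 0 -> a2.2 = pre ++ nseq l2 0 -> a1 = a2.
Proof.
case: a1 a2 => [s1 u1] [s2 u2] [-> Esize] /= E1 E2; congr pair.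
by move: Esize; rewrite E1 E2 !size_cat !size_nseq => /addnI ->.
Qed.

Lemma compatible_pil_inj N (w1 w2 : seq (Sig * seq nat)) :
  forest_addresses (map fst N) ->
  compatible_on (Ap Sig) N w1 -> compatible_on (Ap Sig) N w2 ->
  pil_word w1 = pil_word w2 -> w1 = w2.
Proof.
move=> [[_ ordN] _] [S1 [R1 [_ E1]]] [S2 [R2 [_ E2]]] Epil.
apply: eq_from_onth; elim/ltn_ind => i IH.
case EN: (onth N i) => [[p s]|]; last first.
  have le_Ni : size N <= i by rewrite -onthNE EN.
  by rewrite !onth_default ?S1 ?S2.
have [a1 Ea1] : exists a, onth w1 i = Some a by apply: onth_exists; rewrite S1 -onthTE EN.
have [a2 Ea2] : exists a, onth w2 i = Some a by apply: onth_exists; rewrite S2 -onthTE EN.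
have Epil_i : pil_letter a1 = pil_letter a2.
  by move: (congr1 (fun u => onth u i) Epil); rewrite !onth_map Ea1 Ea2; apply: Some_inj.
rewrite Ea1 Ea2; congr Some.
case: (ordN i p (onth_fst EN)) => [root|[i0 [q [j [lt_i0 Eq Ep]]]]].
  have [l1 El1] := R1 _ _ _ _ Ea1 EN root; have [l2 El2] := R2 _ _ _ _ Ea2 EN root.
  exact: (@pil_letter_padded_inj _ _ [::] _ _ Epil_i El1 El2).
have [s0 EN0] := onth_fstP Eq.
have [b Eb1] : exists b, onth w1 i0 = Some b by apply: onth_exists; rewrite S1 -onthTE EN0.
have Eb2 : onth w2 i0 = Some b by rewrite -IH.
have Eqp : p = rcons q j by move: Ep; rewrite (onth_fst EN) => -[].
have [l1 El1] := E1 _ _ _ _ _ _ _ _ _ Eb1 EN0 Ea1 EN Eqp.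
have [l2 El2] := E2 _ _ _ _ _ _ _ _ _ Eb2 EN0 Ea2 EN Eqp.
apply: (@pil_letter_padded_inj _ _ (rcons b.2 j) _ _ Epil_i);
  rewrite cat_rcons; [exact: El1 | exact: El2].
Qed.

Lemma lift_letter N v n w p s c :
  forest_addresses (map fst N) -> compatible_on (Al Sig) N v ->
  compatible_on (Ap Sig) (take n N) w -> pil_word w = take n v ->
  onth N n = Some (p, s) -> onth v n = Some c ->
  exists u, [/\ size u = c.2, size p = 1%N -> exists l, u = nseq l 0
    & forall i b q s' j, onth w i = Some b -> onth N i = Some (q, s') ->
        p = rcons q j -> exists l, u = b.2 ++ j :: nseq l 0].
Proof.
move=> addrN [_ [_ [_ Ev]]] [Sw _] Pw EN Ec.
have [[uN ordN] _] := addrN.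
have lt_nN : n < size N by rewrite -onthTE EN.
have {}Sw : size w = n by rewrite Sw size_take lt_nN.
case: (ordN n p (onth_fst EN)) => [root|[i0 [q [j [lt_i0 Eq Ep]]]]].
  exists (nseq c.2 0); split; [exact: size_nseq | by exists c.2 |].
  move=> i b q s' j _ EN' Ep; have := forest_address_gt0 addrN (onth_fst EN').
  by move: root; rewrite Ep size_rcons; lia.
have Eqp : p = rcons q j by move: Ep; rewrite (onth_fst EN) => -[].
have [s0 EN0] := onth_fstP Eq.
have [b Eb] : exists b, onth w i0 = Some b by apply: onth_exists; rewrite Sw.
have Evb : onth v i0 = Some (pil_letter b).
  by move: (congr1 (fun u => onth u i0) Pw); rewrite onth_map Eb onth_take lt_i0.
have /= lt_bc := Ev _ _ _ _ _ _ _ _ _ Evb EN0 Ec EN Eqp.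
exists (b.2 ++ j :: nseq (c.2 - size b.2 - 1) 0); split.
- by rewrite size_cat /= size_nseq; lia.
- by have := forest_address_gt0 addrN Eq; rewrite Eqp size_rcons; lia.
move=> i b' q' s' j' Eb' EN'; rewrite Eqp => /rcons_inj[Eq' Ej']; subst q' j'.
have Ei : i = i0.
  apply: (onth_inj _ _ _ uN); last by rewrite (onth_fst EN') Eq.
  by rewrite size_map (leq_ltn_trans (geq_minl _ _) (ltn_trans lt_i0 lt_nN)).
by move: Eb'; rewrite Ei Eb => -[<-]; exists (c.2 - size b.2 - 1).
Qed.

Lemma lift_step N v n w :
  forest_addresses (map fst N) -> compatible_on (Al Sig) N v -> n < size N ->
  compatible_on (Ap Sig) (take n N) w -> pil_word w = take n v ->
  exists2 w', compatible_on (Ap Sig) (take n.+1 N) w' & pil_word w' = take n.+1 v.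
Proof.
move=> addrN cv lt_nN cw Pw.
have [[p s] EN] := onth_exists lt_nN.
have [c Ec] : exists c, onth v n = Some c by apply: onth_exists; case: cv => ->.
have [u [Su Ru Eu]] := lift_letter addrN cv cw Pw EN Ec.
exists (rcons w (c.1, u)).
  rewrite (take_onth EN); apply: compatible_on_rcons => //.
  - by have [_ [_ [Dv _]]] := cv; exact: Dv Ec EN.
  - move=> i b q s' j Eb; rewrite onth_take; case: ifP => // _; exact: Eu Eb.
  - move=> i q s' j; rewrite onth_take; case: ifP => // lt_in EN'.
    exact: no_earlier_child addrN (onth_fst EN) (onth_fst EN') lt_in.
rewrite /pil_word map_rcons -/(pil_word w) Pw (take_onth Ec) /pil_letter /= Su.
by case: c {Ec Su}.
Qed.

Lemma compatible_lift N v :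
  forest_addresses (map fst N) -> compatible_on (Al Sig) N v ->
  exists2 w, compatible_on (Ap Sig) N w & pil_word w = v.
Proof.
move=> addrN cv.
suff /(_ (size N) (leqnn _)) : forall n, n <= size N ->
    exists2 w, compatible_on (Ap Sig) (take n N) w & pil_word w = take n v.
  by case: cv => Sv _; rewrite take_size -Sv take_size.
elim=> [_|n IH lt_nN]; first by exists [::]; rewrite ?take0 //; apply: compatible_on_nil.
have [w cw Pw] := IH (ltnW lt_nN); exact: lift_step addrN cv lt_nN cw Pw.
Qed.

End Compatibility.

Section Lift.
Variable Sig : Type.

(* The fallback is chosen so that [pil_word (Ap_lift f v) = v] holds unconditionally. *)
Definition Ap_lift (f : forest Sig) (v : seq (Sig * nat)) : seq (Sig * seq nat) :=
  if pselect (exists2 w, compatible (A := Ap Sig) f w & pil_word w = v) is left ex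
  then s2val (cid2 ex) else [seq (c.1, nseq c.2 0) | c <- v].

Lemma pil_Ap_lift f v : pil_word (Ap_lift f v) = v.
Proof.
rewrite /Ap_lift; case: pselect => [ex|_]; first by case: (cid2 ex).
by elim: v => //= -[s l] v IH; rewrite /pil_letter size_nseq IH.
Qed.

Lemma compatible_Ap_lift f v :
  compatible (A := Al Sig) f v -> compatible (A := Ap Sig) f (Ap_lift f v).
Proof.
move=> cv; rewrite /Ap_lift; case: pselect => [ex|[]]; first by case: (cid2 ex).
exact: compatible_lift (fnodes_addresses f) cv.
Qed.

Lemma Ap_lift_pil f w : compatible (A := Ap Sig) f w -> Ap_lift f (pil_word w) = w.
Proof.
move=> cw; apply: (compatible_pil_inj (fnodes_addresses f)) => //.
  exact/compatible_Ap_lift/compatible_pil.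
exact: pil_Ap_lift.
Qed.

End Lift.

Section Fibre.
Variables (K : fieldType) (Sig : eqType).
Local Open Scope ring_scope.

Lemma rA_basis_fibre (f : forest Sig) v (S : seq (seq (Sig * seq nat))) :
  uniq S -> {in S, forall w, pil_word w = v} -> Ap_lift f v \in S ->
  rA_basis K (A := Al Sig) f v = \sum_(w <- S) rA_basis K (A := Ap Sig) f w.
Proof.
move=> uS fibS liftS; rewrite {1}/rA_basis; case: asboolP => [cv|ncv].
  rewrite (bigD1_seq _ liftS uS) /= /rA_basis (asboolT (compatible_Ap_lift cv)).
  rewrite big1_seq /= ?addr0 // => w /andP[ne_w Sw]; case: asboolP => // cw.
  by move: ne_w; rewrite -(fibS w Sw) Ap_lift_pil ?eqxx.
rewrite big_seq big1 // => w Sw; rewrite /rA_basis; case: asboolP => // cw.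
by case: ncv; rewrite -(fibS w Sw); apply: compatible_pil.
Qed.

Lemma rA_fibre (x : NT_vec K Sig) v (S : seq (seq (Sig * seq nat))) :
  uniq S -> {in S, forall w, pil_word w = v} ->
  {subset [seq Ap_lift c.2 v | c <- x] <= S} ->
  rA (A := Al Sig) x v = \sum_(w <- S) rA (A := Ap Sig) x w.
Proof.
move=> uS fibS; rewrite /rA exchange_big /=.
elim: x => [|c x IH] liftS; first by rewrite !big_nil.
rewrite !big_cons -mulr_sumr -(rA_basis_fibre uS fibS (liftS _ (mem_head _ _))) IH //.
by move=> w Sw; apply: liftS; rewrite in_cons Sw orbT.
Qed.

Lemma rA_neq0_has (A : alphabet Sig) (x : NT_vec K Sig) w :
  rA (A := A) x w != 0 -> has (fun c => `[< compatible (A := A) c.2 w >]) x.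
Proof.
elim: x => [|c x IH]; first by rewrite /rA big_nil eqxx.
rewrite /rA big_cons /rA_basis /=; case: asboolP => //= _.
by rewrite mulr0 add0r; exact: IH.
Qed.

End Fibre.

Theorem proposition4p10 (K : fieldType) (hK : [pchar K]%R =i pred0)
    (Sig : eqType) (ar : Sig -> nat) (x : NT_vec K Sig) :
  NT_ok ar x ->
  is_pil (@rA K Sig (Ap Sig) x) (@rA K Sig (Al Sig) x).
Proof.
move=> _ v.
set U := undup [seq Ap_lift c.2 v | c <- x].
have U_fibre : {in U, forall w, pil_word w = v}.
  have : all (fun w => pil_word w == v) [seq Ap_lift c.2 v | c <- x].
    rewrite all_map (eq_all (a2 := predT)) ?all_predT // => c.
    by rewrite /preim /= pil_Ap_lift eqxx.
  by move=> /allP fib w; rewrite mem_undup => /fib /eqP.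
exists [seq w <- U | (pil_word w == v) && (rA (A := Ap Sig) x w != 0%R)].
split; first by rewrite filter_uniq ?undup_uniq.
split.
  move=> w; rewrite mem_filter; case: (pil_word w =P v) => //= Ew.
  apply: andb_idr => /rA_neq0_has has_w; rewrite mem_undup -has_pred1 has_map.
  by apply: sub_has has_w => c /asboolP cw; rewrite /preim /= -Ew Ap_lift_pil.
rewrite (@rA_fibre _ _ _ _ U) ?undup_uniq // => [|w]; last by rewrite mem_undup.
rewrite big_filter [RHS]big_mkcond; apply: eq_big_seq => w /U_fibre ->.
by rewrite eqxx; case: eqP.
Qed.
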